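(* Let $G$ and $H$ be connected graphs. If $H$ is an immersion of $G$, then $L(H)$ is a minor of $L(G)$.
   Context: All graphs are finite and loopless but may have parallel edges. For a graph $H$, the line graph $L(H)$ is the simple graph with vertex set $E(H)$ in which two distinct edges of $H$ are adjacent if and only if they share an end. Lifting a pair of adjacent edges $uv,vw$ means deleting them and adding a new edge $uw$ (if $u=w$ the loop is deleted). $H$ is an immersion of $G$ if a graph isomorphic to $H$ can be obtained from a subgraph of $G$ by repeatedly lifting pairs of edges. A graph $J$ is a minor of $G$ if a graph isomorphic to $J$ can be obtained from a subgraph of $G$ by contracting edges. *)

From Stdlib Require Import Relations.
From mathcomp Require Import all_boot.
Set Implicit Arguments. Unset Strict Implicit. Unset Printing Implicit Defensive.

(* A finite multigraph: finite vertex type, finite edge type (so parallel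
   edges are allowed), and each edge has two ends (orientation irrelevant). *)
Record mgraph := MGraph {
  vert : finType;
  edge : finType;
  src : edge -> vert;
  tgt : edge -> vert }.

Definition loopless (G : mgraph) : Prop := forall e : edge G, src e != tgt e.

Definition adj (G : mgraph) : rel (vert G) :=
  fun u v => [exists e : edge G,
    ((src e == u) && (tgt e == v)) || ((src e == v) && (tgt e == u))].

Definition mconnected (G : mgraph) : Prop :=
  (exists v : vert G, True) /\ forall u v : vert G, connect (@adj G) u v.

(* Edge lists over a fixed vertex type; an edge (x,y) is unordered, which is
   accounted for by the reorder/flip steps below. *)
Definition lift_step (V : eqType) (l l' : seq (V * V)) : Prop :=
  (* reordering the edge list (edges are a multiset) *)
  perm_eq l l'
  (* the orientation of an edge is irrelevant *)
  \/ (exists x y rest, l = (x, y) :: rest /\ l' = (y, x) :: rest)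
  (* lifting two distinct edges uv, vw: delete them and add uw
     (if u = w the resulting loop is deleted) *)
  \/ (exists u v w rest, l = (u, v) :: (v, w) :: rest /\
        l' = if u == w then rest else (u, w) :: rest).

Definition lifts (V : eqType) := clos_refl_trans (seq (V * V)) (@lift_step V).

Definition edge_pairs (G : mgraph) (s : seq (edge G)) : seq (vert G * vert G) :=
  [seq (src e, tgt e) | e <- s].

(* H is an immersion of G: a subgraph of G (vertex set S, edge set F with
   ends in S) can be turned, by repeated lifting, into a graph isomorphic to
   H; the isomorphism is an injective f : V(H) -> V(G) with image S and an
   edge bijection (expressed as equality of edge multisets up to order and
   orientation, which the lift_step closure allows). *)
Definition immersion (H G : mgraph) : Prop :=
  exists (f : vert H -> vert G) (F : {set edge G}),
    injective f /\
    (forall e, e \in F -> (src e \in f @: [set: vert H]) && (tgt e \in f @: [set: vert H])) /\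
    lifts (edge_pairs (enum F))
          [seq (f (src e), f (tgt e)) | e <- enum (edge H)].

Definition line_rel (H : mgraph) : rel (edge H) :=
  fun e f => (e != f) &&
    [|| src e == src f, src e == tgt f, tgt e == src f | tgt e == tgt f].

Definition induced_connected (T : finType) (r : rel T) (B : {set T}) : Prop :=
  forall a b, a \in B -> b \in B ->
    connect (fun x y => [&& r x y, x \in B & y \in B]) a b.

Definition minor (T1 T2 : finType) (r1 : rel T1) (r2 : rel T2) : Prop :=
  exists B : T1 -> {set T2},
    (forall x, B x != set0) /\
    (forall x y, x != y -> [disjoint B x & B y]) /\
    (forall x, induced_connected r2 (B x)) /\
    (forall x y, r1 x y -> exists a b, [/\ a \in B x, b \in B y & r2 a b]).

From mathcomp Require Import all_boot.
Set Implicit Arguments. Unset Strict Implicit. Unset Printing Implicit Defensive.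

(* Every edge uw of the lifted graph stands for a trail of G from u to w, and
   trails of distinct edges are edge-disjoint. The edge set of a trail is
   connected in L(G) and contains edges at both of its ends, so these sets are
   branch sets of a minor model: two edges of H sharing an end z give disjoint
   sets that both contain an edge at z, hence adjacent vertices of L(G).
   Along a sequence of lifts we maintain such a family of sets, one per current
   edge; lifting uv, vw to uw merges the sets of uv and vw, which are joined
   through v. *)

Lemma perm_pairwise (T : eqType) (r : rel T) (s t : seq T) :
  symmetric r -> perm_eq s t -> pairwise r s -> pairwise r t.
Proof.
move=> r_sym; elim: s t => [|x s IHs] t; first by rewrite perm_sym => /perm_nilP ->.
move=> pst /andP[rxs prs].
have xt : x \in t by rewrite -(perm_mem pst) mem_head.
case/splitPr: xt pst => t1 t2 pst; have ps12 : perm_eq s (t1 ++ t2).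
  by rewrite -(perm_cons x) (perm_trans pst) // perm_catC /= perm_cons perm_catC.
have rx12 : all (r x) (t1 ++ t2) by rewrite -(perm_all _ ps12).
move: (IHs _ ps12 prs) rx12; rewrite !pairwise_cat allrel_consr pairwise_cons all_cat.
case/and3P=> -> -> -> /andP[rx1 ->]; rewrite !andbT /=.
by apply/allP=> y yt1; rewrite r_sym (allP rx1).
Qed.

Lemma perm_map_ex (T U : eqType) (f : T -> U) (s : seq T) (t : seq U) :
  perm_eq (map f s) t -> exists2 s', perm_eq s s' & map f s' = t.
Proof.
elim: t s => [|y t IHt] s pst.
  by move/perm_nilP/(congr1 size): pst; rewrite size_map => /size0nil->; exists [::].
have /mapP[x xs def_y] : y \in map f s by rewrite (perm_mem pst) mem_head.
subst y; have /IHt[s' ps' <-] : perm_eq (map f (rem x s)) t.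
  by rewrite -(perm_cons (f x)) -map_cons -(permPr pst) perm_map // perm_sym perm_to_rem.
by exists (x :: s'); rewrite ?(perm_trans (perm_to_rem xs)) ?perm_cons.
Qed.

Lemma pairwise_nth (T : Type) (r : rel T) (x0 : T) (s : seq T) (i j : nat) :
  symmetric r -> pairwise r s -> i < size s -> j < size s -> i != j ->
  r (nth x0 s i) (nth x0 s j).
Proof.
move=> r_sym /(pairwiseP x0) prs lti ltj.
by case: ltngtP => // [ltij | ltji] _; [apply: prs | rewrite r_sym; apply: prs].
Qed.

Definition induced (T : finType) (r : rel T) (B : {set T}) : rel T :=
  fun x y => [&& r x y, x \in B & y \in B].

Lemma connect_induced_sub (T : finType) (r : rel T) (B C : {set T}) (x y : T) :
  B \subset C -> connect (induced r B) x y -> connect (induced r C) x y.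
Proof.
move=> sBC; apply: connect_sub => u v /and3P[ruv uB vB].
by apply: connect1; rewrite /induced ruv !(subsetP sBC).
Qed.

Lemma induced_connected_setU (T : finType) (r : rel T) (B1 B2 : {set T}) (a b : T) :
  symmetric r -> induced_connected r B1 -> induced_connected r B2 ->
  a \in B1 -> b \in B2 -> r a b -> induced_connected r (B1 :|: B2).
Proof.
move=> r_sym conn1 conn2 aB1 bB2 rab.
have sym_conn : connect_sym (induced r (B1 :|: B2)).
  by apply: sym_connect_sym => x y; rewrite /induced r_sym [(x \in _) && _]andbC.
have to_a x : x \in B1 :|: B2 -> connect (induced r (B1 :|: B2)) x a.
  case/setUP=> [xB1|xB2].
    exact: connect_induced_sub (subsetUl _ _) (conn1 _ _ xB1 aB1).
  apply: connect_trans (connect_induced_sub (subsetUr _ _) (conn2 _ _ xB2 bB2)) _.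
  by apply: connect1; rewrite /induced r_sym rab !inE aB1 bB2 orbT.
by move=> x y xB yB; rewrite (connect_trans (to_a x xB)) // sym_conn to_a.
Qed.

Section LineGraph.
Variable G : mgraph.

Definition incident (e : edge G) (z : vert G) : bool := (src e == z) || (tgt e == z).

Lemma line_relP (a b : edge G) :
  reflect (a != b /\ exists z, incident a z && incident b z) (line_rel a b).
Proof.
rewrite /line_rel /incident; apply: (iffP andP) => -[-> shared]; split=> //.
  by case/or4P: shared => /eqP e_ab;
    [exists (src a) | exists (src a) | exists (tgt a) | exists (tgt a)];
    rewrite e_ab !eqxx ?orbT.
by case: shared => z /andP[] /orP[]/eqP-> /orP[]/eqP->; rewrite eqxx ?orbT.
Qed.

Lemma line_rel_sym : symmetric (@line_rel G).
Proof.
move=> a b; apply/line_relP/line_relP => -[nab [z /andP[az bz]]];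
  by split; [rewrite eq_sym | exists z; rewrite az bz].
Qed.

Definition touches (B : {set edge G}) (z : vert G) : bool :=
  [exists e in B, incident e z].

Lemma touches_sub (A B : {set edge G}) (z : vert G) :
  A \subset B -> touches A z -> touches B z.
Proof.
by move=> sAB /existsP[e /andP[eA ez]]; apply/existsP; exists e; rewrite (subsetP sAB).
Qed.

Lemma touches_line_rel (A B : {set edge G}) (z : vert G) :
  [disjoint A & B] -> touches A z -> touches B z ->
  exists a b, [/\ a \in A, b \in B & line_rel a b].
Proof.
move=> dAB /existsP[a /andP[aA az]] /existsP[b /andP[bB bz]].
exists a, b; split=> //; apply/line_relP; split; last by exists z; rewrite az bz.
by apply: contraTneq bB => <-; rewrite (disjointFr dAB aA).
Qed.

Definition joins (uv : vert G * vert G) (B : {set edge G}) : Prop :=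
  [/\ induced_connected (@line_rel G) B, touches B uv.1 & touches B uv.2].

Lemma joins_edge (e : edge G) : joins (src e, tgt e) [set e].
Proof.
split=> /=; last 2 first.
- by apply/existsP; exists e; rewrite inE /incident !eqxx.
- by apply/existsP; exists e; rewrite inE /incident !eqxx orbT.
by move=> a b; rewrite !inE => /eqP-> /eqP->; apply: connect0.
Qed.

Lemma joins_flip (u v : vert G) (B : {set edge G}) : joins (u, v) B -> joins (v, u) B.
Proof. by case. Qed.

Lemma joins_setU (u v w : vert G) (B1 B2 : {set edge G}) :
  [disjoint B1 & B2] -> joins (u, v) B1 -> joins (v, w) B2 -> joins (u, w) (B1 :|: B2).
Proof.
move=> d12 [conn1 tu1 tv1] [conn2 tv2 tw2]; split=> /=.
- have [a [b [aB1 bB2 ab]]] := touches_line_rel d12 tv1 tv2.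
  exact: induced_connected_setU line_rel_sym conn1 conn2 aB1 bB2 ab.
- exact: touches_sub (subsetUl _ _) tu1.
- exact: touches_sub (subsetUr _ _) tw2.
Qed.

Definition branch_model (L : seq ((vert G * vert G) * {set edge G})) : Prop :=
  pairwise (fun A B : {set edge G} => [disjoint A & B]) (map snd L) /\
  {in L, forall p, joins p.1 p.2}.

Definition modelled (l : seq (vert G * vert G)) : Prop :=
  exists2 L, map fst L = l & branch_model L.

Lemma modelled_edges (s : seq (edge G)) : uniq s -> modelled (edge_pairs s).
Proof.
move=> uniq_s; exists [seq ((src e, tgt e), [set e]) | e <- s].
  by rewrite -map_comp.
split; last by move=> _ /mapP[e _ ->]; apply: joins_edge.
rewrite -map_comp pairwise_map; move: uniq_s; rewrite uniq_pairwise.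
by apply: sub_pairwise => a b /= nab; rewrite disjoints1 inE.
Qed.

Lemma modelled_perm (l l' : seq (vert G * vert G)) :
  perm_eq l l' -> modelled l -> modelled l'.
Proof.
move=> pll' [L eL [disjL joinsL]]; subst l.
have [L' pLL' <-] := perm_map_ex pll'; exists L' => //; split.
  by apply: perm_pairwise disjL; [move=> A B; apply: disjoint_sym | apply: perm_map].
by move=> p; rewrite -(perm_mem pLL'); apply: joinsL.
Qed.

Lemma modelled_flip (x y : vert G) rest :
  modelled ((x, y) :: rest) -> modelled ((y, x) :: rest).
Proof.
case=> -[//|[xy B] L] /= [-> <-] [disjL joinsL]; exists (((y, x), B) :: L); split=> //.
move=> p; rewrite inE => /predU1P[-> | pL]; last by apply: joinsL; rewrite inE pL orbT.
exact/joins_flip/(joinsL _ (mem_head _ _)).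
Qed.

Lemma modelled_behead (uv : vert G * vert G) rest : modelled (uv :: rest) -> modelled rest.
Proof.
case=> -[//|p L] /= [_ <-] [/andP[_ disjL] joinsL]; exists L => //; split=> //.
by move=> q qL; apply: joinsL; rewrite inE qL orbT.
Qed.

Lemma modelled_lift (u v w : vert G) rest :
  modelled ((u, v) :: (v, w) :: rest) -> modelled ((u, w) :: rest).
Proof.
case=> -[//|[uv B1] [//|[vw B2] L]] /= [-> -> <-].
case=> /= /andP[/andP[d12 d1L] /andP[d2L disjL]] joinsL.
exists (((u, w), B1 :|: B2) :: L); split=> //=.
  rewrite disjL andbT; apply/allP=> B BL.
  by rewrite -setI_eq0 setIUl setU_eq0 !setI_eq0 (allP d1L) ?(allP d2L).
move=> p; rewrite inE => /predU1P[-> | pL]; last by apply: joinsL; rewrite !inE pL !orbT.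
apply: (joins_setU d12 (joinsL _ (mem_head _ _)) (joinsL (v, w, B2) _)).
by rewrite !inE eqxx orbT.
Qed.

Lemma modelled_lift_step (l l' : seq (vert G * vert G)) :
  lift_step l l' -> modelled l -> modelled l'.
Proof.
case=> [pll' | [[x [y [rest [-> ->]]]] | [u [v [w [rest [-> ->]]]]]]].
- exact: modelled_perm.
- exact: modelled_flip.
- by case: eqP => _ /modelled_lift //; apply: modelled_behead.
Qed.

Lemma modelled_lifts (l l' : seq (vert G * vert G)) :
  lifts l l' -> modelled l -> modelled l'.
Proof. by elim=> // [l1 l2 /modelled_lift_step | l1 l2 l3 _ IH12 _ IH23 /IH12/IH23]. Qed.

End LineGraph.

Lemma modelled_minor (G H : mgraph) (f : vert H -> vert G) :
  modelled [seq (f (src e), f (tgt e)) | e <- enum (edge H)] ->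
  minor (@line_rel H) (@line_rel G).
Proof.
case=> L eL [disjL joinsL].
pose i e := index e (enum (edge H)).
pose B e := nth set0 (map snd L) (i e).
have lt_iL e : i e < size L.
  by rewrite -(size_map fst) eL size_map index_mem mem_enum.
have joinsB e : joins (f (src e), f (tgt e)) (B e).
  pose p0 := ((f (src e), f (tgt e)), set0 : {set edge G}).
  have := joinsL _ (mem_nth p0 (lt_iL e)).
  rewrite /B (nth_map p0) // -(nth_map p0 p0.1) // eL (nth_map e) ?index_mem ?mem_enum //.
  by rewrite nth_index ?mem_enum.
have touchesB e z : incident e z -> touches (B e) (f z).
  by case: (joinsB e) => _ tsrc ttgt /orP[]/eqP<-.
have disjB x y : x != y -> [disjoint B x & B y].
  move=> nxy; apply: pairwise_nth disjL _ _ _; rewrite ?size_map ?lt_iL //.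
    by move=> A A'; apply: disjoint_sym.
  by apply: contra_neq nxy => /(congr1 (nth x (enum (edge H)))); rewrite !nth_index ?mem_enum.
exists B; split; last split; last split.
- move=> e; case: (joinsB e) => _ /existsP[a /andP[aB _]] _.
  by apply/set0Pn; exists a.
- exact: disjB.
- by move=> e; case: (joinsB e).
- move=> x y /line_relP[nxy [z /andP[xz yz]]].
  exact: touches_line_rel (disjB _ _ nxy) (touchesB _ _ xz) (touchesB _ _ yz).
Qed.

Theorem proposition9p1 (G H : mgraph) :
  loopless G -> loopless H -> mconnected G -> mconnected H ->
  immersion H G ->
  minor (@line_rel H) (@line_rel G).
Proof.
move=> _ _ _ _ [f [F [_ [_ liftsF]]]].
apply: modelled_minor; apply: modelled_lifts liftsF _.
exact/modelled_edges/enum_uniq.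
Qed.
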